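(* Let $X$ be a one- or two-sided subshift with $\mathcal L(X)=\mathcal L(\tilde X)$, and let $w=w_0w_1\dots w_n$ be a block in $\mathcal L(X)$. Then there exists a unique path $\alpha_0\to\alpha_1\to\dots\to\alpha_n$ in the HB diagram of $X$ with $\alpha_0=w_0$ and $\hat\pi(\alpha_0\alpha_1\dots\alpha_n)=w$.
   Context: Let $\mathcal A$ be a finite alphabet and $\sigma$ the shift, $(\sigma x)_i=x_{i+1}$. A one-sided subshift is a nonempty closed $\sigma$-invariant $X^+\subseteq\mathcal A^{\mathbb N}$; its natural extension is $\tilde X=\{x\in\mathcal A^{\mathbb Z}: x_px_{p+1}\dots\in X^+ \text{ for all } p\in\mathbb Z\}$. For a two-sided subshift $X\subseteq\mathcal A^{\mathbb Z}$, $X^+$ is the set of right rays $x_0x_1\dots$ of points of $X$, so $\tilde X=X$. $\mathcal L(Y)$ denotes the set of finite blocks occurring in points of $Y$. For $a_{-n}\dots a_0\in\mathcal L(\tilde X)$, $\mathrm{fol}(a_{-n}\dots a_0)=\{b_0b_1\dots\in X^+:\exists b\in\tilde X \text{ with } b_{-n}\dots b_0=a_{-n}\dots a_0\}$. A block $a_{-n}\dots a_0\in\mathcal L(\tilde X)$ with $n\ge1$ is significant if $\mathrm{fol}(a_{-n}\dots a_0)\subsetneq\mathrm{fol}(a_{-n+1}\dots a_0)$; single symbols in $\mathcal L(\tilde X)$ are also counted as significant. $\mathrm{sig}(a_{-n}\dots a_0)$ is the longest significant suffix. The HB diagram has vertex set the significant blocks of $\tilde X$ and an arrow $\alpha\to\beta$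 iff there is a symbol $b$ with $\alpha b\in\mathcal L(\tilde X)$ and $\beta=\mathrm{sig}(\alpha b)$. For a finite path $\alpha_0\to\dots\to\alpha_n$, $\hat\pi(\alpha_0\dots\alpha_n)=a_0\dots a_n$ where $a_i$ is the last symbol of $\alpha_i$. *)

From mathcomp Require Import all_boot all_order all_algebra.
Set Implicit Arguments. Unset Strict Implicit. Unset Printing Implicit Defensive.
Import GRing.Theory Num.Theory.
Local Open Scope ring_scope.

Section Shifts.
Variable A : finType.

Definition oshift (x : nat -> A) : nat -> A := fun i => x i.+1.
Definition tshift (x : int -> A) : int -> A := fun i => x (i + 1).
Definition tshift_inv (x : int -> A) : int -> A := fun i => x (i - 1).

(* closedness in the product topology *)
Definition oclosed (X : (nat -> A) -> Prop) : Prop :=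
  forall x, (forall n : nat, exists y, X y /\ forall i : nat, (i < n)%N -> y i = x i) -> X x.
Definition tclosed (X : (int -> A) -> Prop) : Prop :=
  forall x, (forall n : nat, exists y, X y /\
     forall i : int, - (n%:Z) <= i <= n%:Z -> y i = x i) -> X x.

Definition osubshift (X : (nat -> A) -> Prop) : Prop :=
  (exists x, X x) /\ oclosed X /\ (forall x, X x -> X (oshift x)).
Definition tsubshift (X : (int -> A) -> Prop) : Prop :=
  (exists x, X x) /\ tclosed X /\
  (forall x, X x -> X (tshift x)) /\ (forall x, X x -> X (tshift_inv x)).

Definition natext (X : (nat -> A) -> Prop) : (int -> A) -> Prop :=
  fun x => forall p : int, X (fun k : nat => x (p + k%:Z)).

Definition rays (X : (int -> A) -> Prop) : (nat -> A) -> Prop :=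
  fun y => exists x, X x /\ forall k : nat, y k = x k%:Z.

Definition oL (X : (nat -> A) -> Prop) (w : seq A) : Prop :=
  exists x (i : nat), X x /\ w = mkseq (fun k => x (i + k)%N) (size w).
Definition tL (X : (int -> A) -> Prop) (w : seq A) : Prop :=
  exists x (i : int), X x /\ w = mkseq (fun k => x (i + k%:Z)) (size w).

(* The HB diagram is determined by the pair (Xp, Xt) = (X^+, \tilde X). *)
Section HB.
Variables (Xp : (nat -> A) -> Prop) (Xt : (int -> A) -> Prop).

(* fol(a_{-n} ... a_0), with a = [:: a_{-n}; ...; a_0], n = size a - 1 *)
Definition fol (a : seq A) : (nat -> A) -> Prop :=
  fun y => Xp y /\ exists b, Xt b /\
    a = mkseq (fun k => b (k%:Z - (size a).-1%:Z)) (size a) /\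
    forall k : nat, b k%:Z = y k.

Definition subpred (P Q : (nat -> A) -> Prop) := forall y, P y -> Q y.

Definition significant (a : seq A) : Prop :=
  tL Xt a /\
  (size a = 1%N \/
   ((2 <= size a)%N /\ subpred (fol a) (fol (behead a)) /\
    ~ subpred (fol (behead a)) (fol a))).

Definition is_sig (w s : seq A) : Prop :=
  suffix s w /\ significant s /\
  forall s', suffix s' w -> significant s' -> (size s' <= size s)%N.

Definition hb_arrow (alpha beta : seq A) : Prop :=
  significant alpha /\ significant beta /\
  exists c : A, tL Xt (rcons alpha c) /\ is_sig (rcons alpha c) beta.

Definition hb_path (p : seq (seq A)) : Prop :=
  (0 < size p)%N /\ (forall a, a \in p -> significant a) /\
  forall i : nat, (i.+1 < size p)%N -> hb_arrow (nth [::] p i) (nth [::] p i.+1).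

End HB.

(* \hat\pi: last symbols of the vertices (vertices are nonempty, so the
   default x0 is never used) *)
Definition pihat (x0 : A) (p : seq (seq A)) : seq A := map (last x0) p.

End Shifts.

(* Single symbols of L(X~) are significant, so every block of L(X~) has a longest
   significant suffix sig, and it ends with the last symbol of the block.  Hence
   the lift of w is forced letter by letter: alpha_0 = w_0 and
   alpha_(k+1) = sig(alpha_k w_(k+1)), the only arrow out of alpha_k whose target
   ends with w_(k+1).  This arrow exists because alpha_k is a suffix of
   w_0 ... w_k, so alpha_k w_(k+1) is a factor of w and lies in L(X~).  Only
   the membership of w in L(X~) is used, not the subshift axioms. *)

From mathcomp Require Import all_boot all_order all_algebra.
From mathcomp Require Import zify.
From Stdlib Require Import Classical.
Set Implicit Arguments. Unset Strict Implicit. Unset Printing Implicit Defensive.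
Import GRing.Theory Num.Theory.

Lemma ex_minimal_nat (P : nat -> Prop) n :
  P n -> exists m, P m /\ forall k, P k -> (m <= k)%N.
Proof.
elim/ltn_ind: n => n IH Pn.
have [[k [Pk lt_kn]]|no_smaller] := classic (exists k, P k /\ (k < n)%N).
  exact: IH Pk.
exists n; split=> // k Pk; rewrite leqNgt; apply/negP => lt_kn.
by apply: no_smaller; exists k.
Qed.

Section HBPaths.
Variables (A : finType) (Xp : (nat -> A) -> Prop) (Xt : (int -> A) -> Prop).

Lemma tL_infix (s w : seq A) : infix s w -> tL Xt w -> tL Xt s.
Proof.
case/infixP=> t [t' ->] [x [i [Xx Ew]]]; exists x, (i + Posz (size t))%R; split=> //.
apply: (@eq_from_nth _ (x 0%R)) => [|k lt_ks]; first by rewrite size_mkseq.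
have lt_k : (size t + k < size (t ++ s ++ t'))%N.
  by rewrite !size_cat ltn_add2l (leq_trans lt_ks) ?leq_addr.
have := congr1 (nth (x 0%R) ^~ (size t + k)%N) Ew.
rewrite nth_cat ltnNge leq_addr /= addKn nth_cat lt_ks => ->.
rewrite !nth_mkseq //; congr x; lia.
Qed.

Lemma significant_size_gt0 (a : seq A) : significant Xp Xt a -> (0 < size a)%N.
Proof. by case=> _ [->|[le2 _]] //; exact: leq_trans le2. Qed.

Lemma is_sig_exists (w : seq A) (c : A) :
  tL Xt (rcons w c) -> exists s, is_sig Xp Xt (rcons w c) s.
Proof.
move=> Lwc; pose P k := significant Xp Xt (drop k (rcons w c)).
have Psize : P (size w).
  rewrite /P -cats1 drop_size_cat //; split; last by left.
  by apply: tL_infix Lwc; rewrite suffixW // -cats1 suffix_suffix.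
have [m [Pm minm]] := ex_minimal_nat Psize.
exists (drop m (rcons w c)); split; first exact: suffix_drop.
split=> // s' suff_s' sig_s'.
have Es' : s' = drop (size (rcons w c) - size s') (rcons w c).
  by apply/esym/eqP; rewrite -suffixE.
have := minm (size (rcons w c) - size s'); rewrite /P -Es' => /(_ sig_s').
rewrite size_drop; move: (size_suffix suff_s'); move: (size _) (size s') => n k; lia.
Qed.

Lemma is_sig_uniq (w s1 s2 : seq A) :
  is_sig Xp Xt w s1 -> is_sig Xp Xt w s2 -> s1 = s2.
Proof.
move=> [suff1 [sig1 max1]] [suff2 [sig2 max2]].
have eq_size : size s1 = size s2 by apply/eqP; rewrite eqn_leq max2 // max1.
by move: suff1 suff2; rewrite !suffixE eq_size => /eqP <- /eqP.
Qed.

Lemma is_sig_last (w s : seq A) (d : A) :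
  is_sig Xp Xt w s -> last d s = last d w.
Proof.
move=> [/suffixP [t ->] [/significant_size_gt0 s_gt0 _]].
by rewrite last_cat; case: s s_gt0.
Qed.

Lemma hb_arrow_inj (a b1 b2 : seq A) (d : A) :
  hb_arrow Xp Xt a b1 -> hb_arrow Xp Xt a b2 -> last d b1 = last d b2 -> b1 = b2.
Proof.
move=> [_ [_ [c1 [_ sig1]]]] [_ [_ [c2 [_ sig2]]]].
rewrite (is_sig_last d sig1) (is_sig_last d sig2) !last_rcons => eq_c.
by rewrite eq_c in sig1; exact: is_sig_uniq sig1 sig2.
Qed.

Lemma hb_path_last_significant (p : seq (seq A)) :
  hb_path Xp Xt p -> significant Xp Xt (last [::] p).
Proof. by case: p => [[]|a p [_ [sig_p _]]] //; apply: sig_p; exact: (mem_last a p). Qed.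

Lemma hb_path_rcons (p : seq (seq A)) (b : seq A) :
  hb_path Xp Xt p -> hb_arrow Xp Xt (last [::] p) b -> hb_path Xp Xt (rcons p b).
Proof.
move=> [p_gt0 [sig_p arrow_p]] arrow_b; split; first by rewrite size_rcons.
split=> [a|i].
  by rewrite mem_rcons inE => /predU1P [->|/sig_p //]; case: arrow_b => _ [].
rewrite size_rcons ltnS leq_eqVlt => /predU1P [eq_i|lt_i].
  by rewrite !nth_rcons -eq_i ltnSn ltnn eqxx; rewrite -nth_last -eq_i in arrow_b.
by rewrite !nth_rcons lt_i ltnW //; exact: arrow_p.
Qed.

Definition hb_lift (w0 : A) (ws : seq A) (p : seq (seq A)) : Prop :=
  hb_path Xp Xt p /\ head [::] p = [:: w0] /\ pihat w0 p = w0 :: ws.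

Lemma hb_lift_exists (w0 : A) (ws : seq A) : tL Xt (w0 :: ws) ->
  exists p, hb_lift w0 ws p /\ suffix (last [::] p) (w0 :: ws).
Proof.
elim/last_ind: ws => [|ws c IH] Lw.
  exists [:: [:: w0]]; split; last exact: suffix_refl.
  split; last by [].
  split=> //; split=> // a; rewrite inE => /eqP ->; split=> //; by left.
have [p [[path_p [head_p pihat_p]] suff_p]] :=
  IH (tL_infix (prefixW (prefix_rcons (w0 :: ws) c)) Lw).
have suff_alc : suffix (rcons (last [::] p) c) (rcons (w0 :: ws) c).
  by rewrite suffix_rcons eqxx.
have L_alc := tL_infix (suffixW suff_alc) Lw.
have [b sig_b] := is_sig_exists L_alc.
exists (rcons p b); split; last by rewrite last_rcons (suffix_trans sig_b.1).
split.
  apply: (hb_path_rcons path_p); split; first exact: hb_path_last_significant.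
  by split; [exact: sig_b.2.1 | exists c].
split; first by case: (p) head_p.
by rewrite /pihat map_rcons -/(pihat w0 p) pihat_p (is_sig_last w0 sig_b) last_rcons.
Qed.

Lemma hb_lift_uniq (w0 : A) (ws : seq A) (p q : seq (seq A)) :
  hb_lift w0 ws p -> hb_lift w0 ws q -> p = q.
Proof.
move=> [path_p [head_p pihat_p]] [path_q [head_q pihat_q]].
have eq_size : size p = size q.
  by move: (congr1 size pihat_p) (congr1 size pihat_q); rewrite !size_map => -> ->.
apply: (@eq_from_nth _ [::]) => // i; elim: i => [|i IH] lt_ip.
  by rewrite !nth0 head_p head_q.
have lt_iq : (i.+1 < size q)%N by rewrite -eq_size.
apply: (hb_arrow_inj (d := w0) (path_p.2.2 i lt_ip)).
  by rewrite IH 1?ltnW //; exact: path_q.2.2 i lt_iq.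
by rewrite -!(nth_map [::] w0 (last w0)) // -!/(pihat _ _) pihat_p pihat_q.
Qed.

Lemma hb_lift_exists_unique (w0 : A) (ws : seq A) :
  tL Xt (w0 :: ws) -> exists! p, hb_lift w0 ws p.
Proof.
move=> Lw; have [p [lift_p _]] := hb_lift_exists Lw.
by exists p; split=> // q; exact: hb_lift_uniq.
Qed.

End HBPaths.

Theorem theorem5p8 (A : finType) :
  (* one-sided case *)
  (forall X : (nat -> A) -> Prop,
     osubshift X ->
     (forall u, oL X u <-> tL (natext X) u) ->
     forall (w0 : A) (ws : seq A), oL X (w0 :: ws) ->
     exists! p : seq (seq A),
       hb_path X (natext X) p /\ head [::] p = [:: w0] /\
       pihat w0 p = w0 :: ws)
  /\
  (* two-sided case: X^+ = right rays of X, \tilde X = X *)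
  (forall X : (int -> A) -> Prop,
     tsubshift X ->
     forall (w0 : A) (ws : seq A), tL X (w0 :: ws) ->
     exists! p : seq (seq A),
       hb_path (rays X) X p /\ head [::] p = [:: w0] /\
       pihat w0 p = w0 :: ws).
Proof.
split=> [X _ eqL w0 ws /eqL | X _ w0 ws]; exact: hb_lift_exists_unique.
Qed.
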